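(* In the setting below, if there is a subinterval $[t_1,t_2]\subset(0,1]$ with $t_1<t_2$ on which $Z_1(t)$ stays on one of the coordinate axes, then both $Z_1(t)$ and $Z_2(t)$ stay on the coordinate axes (each on an axis) for all $t\in(0,1]$.
   Context: Planar three-body problem with masses $m_1=m_2=m_3=1$, $\chi=\{q=(q_1,q_2,q_3)\in(\mathbb{R}^2)^3: q_1+q_2+q_3=0\}$, action $\mathcal{A}(q)=\int_0^1\big(\tfrac12\sum|\dot q_i|^2+\sum_{i<j}\frac{1}{|q_i-q_j|}\big)dt$. Let $Q_{S_4}=\{q: q_1=q_2=(-a_2,0),\ q_3=(2a_2,0),\ a_2\ge0\}$ and $Q_{E_1}=\{q: q_1=(0,-2b_1),\ q_2=(-b_2,b_1),\ q_3=(b_2,b_1),\ b_1,b_2\in\mathbb{R}\}$. Let $q$ minimize $\mathcal{A}$ over $\{q\in H^1([0,1],\chi): q(0)\in Q_{S_4},\ q(1)\in Q_{E_1}\}$; it is collision-free for $t\in(0,1]$ and there satisfies Newton's equations $\ddot q_i=\sum_{j\ne i}\frac{q_j-q_i}{|q_j-q_i|^3}$. Jacobi coordinates: $Z_1=q_1-q_2$, $Z_2=q_3-\frac{q_1+q_2}{2}$. *)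

From HB Require Import structures.
From mathcomp Require Import all_boot all_order all_algebra.
From mathcomp Require Import all_classical all_reals all_analysis.
Set Implicit Arguments. Unset Strict Implicit. Unset Printing Implicit Defensive.
Import Order.TTheory GRing.Theory Num.Theory.
Import numFieldNormedType.Exports.
Local Open Scope classical_set_scope.
Local Open Scope ring_scope.

Section ThreeBody.
Variable R : realType.

Definition pt := (R * R)%type.
Definition psub (a b : pt) : pt := (a.1 - b.1, a.2 - b.2).
Definition normsq (a : pt) : R := a.1 ^+ 2 + a.2 ^+ 2.
Definition dist (a b : pt) : R := Num.sqrt (normsq (psub a b)).

(* scalar H^1([0,1]) function f with weak derivative g (g in L^2(0,1)) *)
Definition H1fun (f g : R -> R) : Prop :=
  measurable_fun `[(0%R:R), (1%R:R)]%classic g /\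
  (\int[@lebesgue_measure R]_(x in `[(0%R:R), (1%R:R)]%classic) ((g x) ^+ 2)%R%:E < +oo)%E /\
  forall t, 0 <= t <= 1 ->
    (f t)%:E = ((f (0%R:R))%:E + \int[@lebesgue_measure R]_(x in `[(0%R:R), t]%classic) (g x)%:E)%E.

Definition H1pt (q v : R -> pt) : Prop :=
  H1fun (fun t => (q t).1) (fun t => (v t).1) /\
  H1fun (fun t => (q t).2) (fun t => (v t).2).

Definition pot (a b : pt) : \bar R :=
  if dist a b == 0 then +oo%E else ((dist a b)^-1)%:E.

(* Lagrangian (masses 1) *)
Definition lagr (a1 a2 a3 w1 w2 w3 : pt) : \bar R :=
  ((2^-1 * (normsq w1 + normsq w2 + normsq w3))%:E
   + pot a1 a2 + pot a1 a3 + pot a2 a3)%E.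

Definition action (q1 q2 q3 v1 v2 v3 : R -> pt) : \bar R :=
  \int[@lebesgue_measure R]_(t in `[(0%R:R), (1%R:R)]%classic)
     lagr (q1 t) (q2 t) (q3 t) (v1 t) (v2 t) (v3 t).

Definition in_chi (a1 a2 a3 : pt) : Prop :=
  a1.1 + a2.1 + a3.1 = 0 /\ a1.2 + a2.2 + a3.2 = 0.

Definition in_QS4 (a1 a2 a3 : pt) : Prop :=
  exists c : R, 0 <= c /\ a1 = (- c, 0) /\ a2 = (- c, 0) /\ a3 = (2 * c, 0).

Definition in_QE1 (a1 a2 a3 : pt) : Prop :=
  exists b1 b2 : R, a1 = (0, - (2 * b1)) /\ a2 = (- b2, b1) /\ a3 = (b2, b1).

(* admissible paths: H^1([0,1], chi) with q(0) in Q_{S_4}, q(1) in Q_{E_1};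
   v1 v2 v3 are (representatives of) the weak derivatives *)
Definition admissible (q1 q2 q3 v1 v2 v3 : R -> pt) : Prop :=
  H1pt q1 v1 /\ H1pt q2 v2 /\ H1pt q3 v3 /\
  (forall t, 0 <= t <= 1 -> in_chi (q1 t) (q2 t) (q3 t)) /\
  in_QS4 (q1 0) (q2 0) (q3 0) /\ in_QE1 (q1 1) (q2 1) (q3 1).

Definition action_minimizer (q1 q2 q3 : R -> pt) : Prop :=
  exists v1 v2 v3, admissible q1 q2 q3 v1 v2 v3 /\
    forall p1 p2 p3 w1 w2 w3, admissible p1 p2 p3 w1 w2 w3 ->
      (action q1 q2 q3 v1 v2 v3 <= action p1 p2 p3 w1 w2 w3)%E.

Definition acc (a b c : pt) : pt :=
  ((b.1 - a.1) / (dist a b) ^+ 3 + (c.1 - a.1) / (dist a c) ^+ 3,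
   (b.2 - a.2) / (dist a b) ^+ 3 + (c.2 - a.2) / (dist a c) ^+ 3).

Definition second_deriv_at (f : R -> R) (t F : R) : Prop :=
  derivable f t 1 /\ derivable (derive1 f) t 1 /\ derive1 (derive1 f) t = F.

Definition newton_at (q : R -> pt) (F : pt) (t : R) : Prop :=
  second_deriv_at (fun s => (q s).1) t F.1 /\
  second_deriv_at (fun s => (q s).2) t F.2.

Definition newton (q1 q2 q3 : R -> pt) (t : R) : Prop :=
  newton_at q1 (acc (q1 t) (q2 t) (q3 t)) t /\
  newton_at q2 (acc (q2 t) (q1 t) (q3 t)) t /\
  newton_at q3 (acc (q3 t) (q1 t) (q2 t)) t.

Definition collision_free_at (q1 q2 q3 : R -> pt) (t : R) : Prop :=
  q1 t <> q2 t /\ q1 t <> q3 t /\ q2 t <> q3 t.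

Definition Z1 (q1 q2 : R -> pt) (t : R) : pt := psub (q1 t) (q2 t).
Definition Z2 (q1 q2 q3 : R -> pt) (t : R) : pt :=
  ((q3 t).1 - ((q1 t).1 + (q2 t).1) / 2, (q3 t).2 - ((q1 t).2 + (q2 t).2) / 2).

Definition stays_on_axis (z : R -> pt) (P : R -> Prop) : Prop :=
  (forall t, P t -> (z t).2 = 0) \/ (forall t, P t -> (z t).1 = 0).

End ThreeBody.

From HB Require Import structures.
From mathcomp Require Import all_boot all_order all_algebra.
From mathcomp Require Import all_classical all_reals all_analysis.
From mathcomp Require Import ring lra.
Import Order.TTheory GRing.Theory Num.Theory.
Import numFieldNormedType.Exports measurable_realfun.
Local Open Scope classical_set_scope.
Local Open Scope ring_scope.

(** If [Z1] lies on the x-axis on [[t1, t2]], bodies 1 and 2 have the same height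
    there, so their vertical accelerations agree and Newton's equations give
    [(y3 - y1) (r13^-3 - r23^-3) = 0].  Either body 3 leaves that height at some
    time of [(t1, t2)]; then [r13 = r23] nearby and the configuration is isosceles
    ([x1 + x2 = 2 x3]).  Or all three bodies stay on one horizontal line.  In both
    cases the two defects ([y1 - y2] and [x1 + x2 - 2 x3], resp. [y2 - y1] and
    [y3 - y1]) solve a linear second order system with coefficients continuous on
    [(0, 1)]: for the isosceles one this uses
    [r13^-3 - r23^-3 = h (r23^2 - r13^2)] with [h > 0].  Since they vanish near
    one time, a Gronwall estimate on [f^2 + f'^2 + g^2 + g'^2] makes them vanish on
    [(0, 1)], and continuity of the H^1 path at [t = 1] (the only use of the
    minimizing property) extends this to [(0, 1]].  The y-axis case reduces to the
    x-axis case by exchanging the coordinates. *)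

Section SobolevEndpoint.
Context {R : realType}.
Local Notation mu := (@lebesgue_measure R).
Local Notation I01 := (`[(0:R), (1:R)]%classic : set R).

Lemma sqr_integrable_integrable (g : R -> R) :
  measurable_fun I01 g -> (\int[mu]_(x in I01) (g x ^+ 2)%:E < +oo)%E ->
  mu.-integrable I01 (EFin \o g).
Proof.
move=> mg g2_fin; apply/integrableP; split; first exact/measurable_EFinP.
have mg2 : measurable_fun I01 (fun x => g x ^+ 2) by exact: measurable_funX.
(* [|g| <= 1 + g^2] and [[0, 1]] has finite measure *)
apply: (@le_lt_trans _ _ (\int[mu]_(x in I01) (1%:E + (g x ^+ 2)%:E))%E).
  apply: ge0_le_integral => //.
  - by apply: measurableT_comp => //; exact/measurable_EFinP.
  - by apply: emeasurable_funD => //; exact/measurable_EFinP.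
  move=> x _ /=; rewrite -EFinD lee_fin -real_normK ?num_real //.
  by have := sqr_ge0 (`|g x| - 1); have := normr_ge0 (g x); nra.
rewrite ge0_integralD //; last 2 first.
- by move=> x _; rewrite lee_fin sqr_ge0.
- exact/measurable_EFinP.
rewrite integral_cst //= lebesgue_measure_itv /= lte_fin ltr01 oppr0 adde0 mul1e.
by rewrite lte_add_pinfty // ltey.
Qed.

Lemma H1fun_cvg_left (f g : R -> R) : H1fun f g -> f x @[x --> 1^'-] --> f 1.
Proof.
case=> mg [g2_fin f_prim]; have ig := sqr_integrable_integrable _ mg g2_fin.
have fE t : 0 <= t <= 1 -> f t = f 0 + parameterized_integral mu 0 t g.
  move=> /andP[t_ge0 t_le1]; apply/EFin_inj; rewrite f_prim ?t_ge0 ?t_le1 // EFinD.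
  rewrite /parameterized_integral /Rintegral fineK //; apply: integrable_fin_num => //.
  by apply: integrableS ig => //; apply: subset_itvl; rewrite bnd_simp.
rewrite fE ?ler01 ?lexx //.
apply: cvg_trans (cvgD (cvg_cst (f 0)) (parameterized_integral_cvg_at_left ltr01 ig)).
apply: near_eq_cvg; near=> x; rewrite [f x]fE //; apply/andP; split; apply: ltW.
- by near: x; exact: nbhs_left_gt.
- by near: x; exact: nbhs_left_lt.
Unshelve. all: by end_near. Qed.

End SobolevEndpoint.

Section RealCalculus.
Context {R : realType}.

Lemma is_derive_near_eq [f g : R -> R] [t a b : R] :
  (\forall s \near t, f s = g s) -> is_derive t 1 f a -> is_derive t 1 g b -> a = b.
Proof.
move=> fg Df Dg; have Dg' := near_eq_is_derive fg Df.
by rewrite -(@derive_val _ _ _ _ _ _ _ Dg') (@derive_val _ _ _ _ _ _ _ Dg).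
Qed.

Lemma near_eq_derive1 [f g : R -> R] [t : R] :
  (\forall s \near t, f s = g s) -> \forall s \near t, derive1 f s = derive1 g s.
Proof.
move=> /near_join; apply: filterS => s fg.
by rewrite !derive1E; exact: near_eq_derive.
Qed.

Lemma is_derive_le0_ge (F dF : R -> R) (a b : R) : a <= b ->
  {in `[a, b], forall s : R, is_derive s 1 F (dF s)} ->
  {in `]a, b[, forall s : R, dF s <= 0} -> F b <= F a.
Proof.
move=> ab DF dF_le0.
have DFo : {in `]a, b[, forall s : R, is_derive s 1 F (dF s)}.
  by move=> s s_in; apply: DF; apply: subset_itv_oo_cc.
have /andP[a_in b_in] : (a \in `[a, b]) && (b \in `[a, b]) by rewrite !in_itv /= !lexx ab.
apply: (@ler0_derive1_le_cc _ F a b) => //.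
- by move=> s /DFo Ds; exact: (@ex_derive _ _ _ _ _ _ _ Ds).
- by move=> s s_in; rewrite derive1E (@derive_val _ _ _ _ _ _ _ (DFo s s_in)); exact: dF_le0.
- apply: derivable_within_continuous => s /DF Ds; exact: (@ex_derive _ _ _ _ _ _ _ Ds).
Qed.

Lemma is_derive_ge0_le (F dF : R -> R) (a b : R) : a <= b ->
  {in `[a, b], forall s : R, is_derive s 1 F (dF s)} ->
  {in `]a, b[, forall s : R, 0 <= dF s} -> F a <= F b.
Proof.
move=> ab DF dF_ge0; rewrite -lerN2.
apply: (@is_derive_le0_ge (fun s => - F s) (fun s => - dF s)) => // [s /DF|s /dF_ge0].
- exact: is_deriveN.
- by rewrite oppr_le0.
Qed.

Lemma second_deriv_at_is_derive (f : R -> R) (t F : R) : second_deriv_at f t F ->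
  is_derive t 1 f (derive1 f t) /\ is_derive t 1 (derive1 f) F.
Proof.
case=> d1 [d2 <-]; rewrite !derive1E.
by split; apply: derivableP.
Qed.

Lemma is_derive_continuous (f : R -> R) (t a : R) :
  is_derive t 1 f a -> {for t, continuous f}.
Proof.
move=> Df; apply: differentiable_continuous; apply/derivable1_diffP.
exact: (@ex_derive _ _ _ _ _ _ _ Df).
Qed.

Lemma continuousX (f : R -> R) (n : nat) (t : R) : {for t, continuous f} ->
  {for t, continuous (fun s => f s ^+ n)}.
Proof. by move=> fc; apply: continuous_comp fc (@exprn_continuous _ _ _). Qed.

Lemma continuous_bounded_itv [c : R -> R] [a b : R] : a <= b ->
  {in `[a, b], forall s : R, {for s, continuous c}} ->
  exists M, {in `[a, b], forall s : R, `|c s| <= M}.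
Proof.
move=> ab cc; have [s _ s_max] : exists2 s, s \in `[a, b] &
    forall t, t \in `[a, b] -> `|c t| <= `|c s|.
  apply: EVT_max => //; apply: continuous_in_subspaceT => t /[!inE] t_in.
  exact: continuous_comp (cc t t_in) (@norm_continuous _ _ _).
by exists `|c s|.
Qed.

Lemma cvg_left_eq0 [h : R -> R] [l r : R] : h x @[x --> r^'-] --> h r ->
  {in `]l, r[, forall x : R, h x = 0} -> {in `]l, r], forall x : R, h x = 0}.
Proof.
move=> h_cvg h0 x; rewrite in_itv /= le_eqVlt => /andP[lx /orP[/eqP xr | xr]]; last first.
  by apply: h0; rewrite in_itv /= lx xr.
rewrite xr in lx *; apply: (norm_cvg_unique h_cvg); apply: cvg_near_cst.
near=> y; apply: h0; rewrite in_itv /=; apply/andP; split.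
- by near: y; exact: nbhs_left_gt.
- by near: y; exact: nbhs_left_lt.
Unshelve. all: by end_near. Qed.

Lemma expR_scale_is_derive (c s : R) :
  is_derive s 1 (fun x => expR (c * x)) (expR (c * s) * c).
Proof.
have Dlin : is_derive s 1 (fun x : R => c * x) c.
  have := @is_deriveZ R R R id c s 1 1 (is_derive_id s 1).
  by move/is_derive_eq; apply; rewrite /GRing.scale /= mulr1.
exact: is_derive1_comp (is_derive_expR _) Dlin.
Qed.

Lemma gronwall_eq0 (E dE : R -> R) (K a b : R) : a <= b ->
  {in `[a, b], forall s : R, is_derive s 1 E (dE s)} ->
  {in `[a, b], forall s : R, 0 <= E s} ->
  {in `[a, b], forall s : R, `|dE s| <= K * E s} ->
  E a = 0 <-> E b = 0.
Proof.
move=> ab DE E_ge0 dE_le.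
have /andP[a_in b_in] : (a \in `[a, b]) && (b \in `[a, b]) by rewrite !in_itv /= !lexx ab.
have DEw c : {in `[a, b], forall s : R, is_derive s 1 (fun x => E x * expR (c * x))
    (expR (c * s) * (dE s + c * E s))}.
  move=> s /DE Ds; have /is_derive_eq := is_deriveM Ds (expR_scale_is_derive c s).
  by apply; rewrite -![_ *: _]/(_ * _); ring.
have dE_bounds s : s \in `]a, b[ -> - (K * E s) <= dE s <= K * E s.
  by move=> /subset_itv_oo_cc /dE_le; rewrite ler_norml.
have Ew_eq0 c s : s \in `[a, b] -> E s * expR (c * s) <= 0 -> E s = 0.
  move=> s_in; rewrite pmulr_lle0 ?expR_gt0 // => Es_le0.
  by apply/eqP; rewrite eq_le Es_le0 E_ge0.
(* [E e^{-K s}] is nonincreasing and [E e^{K s}] is nondecreasing *)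
split=> [Ea0 | Eb0].
- apply: (Ew_eq0 (- K)) => //; rewrite -[0](mul0r (expR (- K * a))) -Ea0.
  apply: is_derive_le0_ge ab (DEw _) _ => s /dE_bounds.
  by rewrite pmulr_rle0 ?expR_gt0 //; lra.
- apply: (Ew_eq0 K) => //; rewrite -[0](mul0r (expR (K * b))) -Eb0.
  apply: is_derive_ge0_le ab (DEw _) _ => s /dE_bounds.
  by rewrite pmulr_rge0 ?expR_gt0 //; lra.
Qed.

Lemma normrM_le_sqrD (c x y M : R) :
  `|c| <= M -> `|c * x * y| <= M * (x ^+ 2 + y ^+ 2) / 2.
Proof.
move=> cM; rewrite !normrM -[x ^+ 2]real_normK ?num_real // -[y ^+ 2]real_normK ?num_real //.
by have := normr_ge0 x; have := normr_ge0 y; have := normr_ge0 c;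
  have := sqr_ge0 (`|x| - `|y|); nra.
Qed.

End RealCalculus.

Ltac continuity := repeat match goal with
  | |- context [continuous_at _ (fun _ => ?c)] => exact: cst_continuous
  | |- context [continuous_at _ (fun _ => _ + _)] => apply: continuousD
  | |- context [continuous_at _ (fun _ => _ * _)] => apply: continuousM
  | |- context [continuous_at _ (fun _ => - _)] => apply: continuousN
  | |- context [continuous_at _ (fun _ => _ ^+ _)] => apply: continuousX
  | |- context [continuous_at _ (fun _ => _^-1)] => apply: continuousV
  | |- _ => assumption
  end.

Section LinearSystem2.
Context {R : realType}.
Variables (l r : R) (f f' g g' c11 c12 c21 c22 : R -> R).
Hypothesis Df : {in `]l, r[, forall t : R, is_derive t 1 f (f' t)}.
Hypothesis Dg : {in `]l, r[, forall t : R, is_derive t 1 g (g' t)}.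
Hypothesis Df' : {in `]l, r[, forall t : R, is_derive t 1 f' (c11 t * f t + c12 t * g t)}.
Hypothesis Dg' : {in `]l, r[, forall t : R, is_derive t 1 g' (c21 t * f t + c22 t * g t)}.
Hypothesis C11 : {in `]l, r[, forall t : R, {for t, continuous c11}}.
Hypothesis C12 : {in `]l, r[, forall t : R, {for t, continuous c12}}.
Hypothesis C21 : {in `]l, r[, forall t : R, {for t, continuous c21}}.
Hypothesis C22 : {in `]l, r[, forall t : R, {for t, continuous c22}}.

Let energy t := f t ^+ 2 + f' t ^+ 2 + g t ^+ 2 + g' t ^+ 2.
Let denergy t := 2 * (f t * f' t + f' t * (c11 t * f t + c12 t * g t)
  + g t * g' t + g' t * (c21 t * f t + c22 t * g t)).

Lemma energy_is_derive : {in `]l, r[, forall t : R, is_derive t 1 energy (denergy t)}.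
Proof.
move=> t t_in; have /is_derive_eq := is_deriveD (is_deriveD (is_deriveD
  (is_deriveX 2 (Df _ t_in)) (is_deriveX 2 (Df' _ t_in)))
  (is_deriveX 2 (Dg _ t_in))) (is_deriveX 2 (Dg' _ t_in)).
by apply; rewrite /denergy /= !expr1 -![_ *: _]/(_ * _); ring.
Qed.

Let subitv_cc_oo [a b : R] : a \in `]l, r[ -> b \in `]l, r[ -> {subset `[a, b] <= `]l, r[}.
Proof.
rewrite !in_itv /= => /andP[la _] /andP[_ br].
by apply: subitvP; rewrite subitvE !bnd_simp la br.
Qed.

Lemma denergy_bound [a b : R] : a \in `]l, r[ -> b \in `]l, r[ -> a <= b ->
  exists K, {in `[a, b], forall s : R, `|denergy s| <= K * energy s}.
Proof.
move=> a_in b_in ab; have sub := subitv_cc_oo a_in b_in.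
have sum_cont : {in `[a, b], forall s : R, {for s, continuous (fun s =>
    `|c11 s| + `|c12 s| + `|c21 s| + `|c22 s|)}}.
  move=> s /sub s_in.
  have nc (h : R -> R) : {for s, continuous h} -> {for s, continuous (fun x => `|h x|)}.
    by move=> hc; exact: continuous_comp hc (@norm_continuous _ _ _).
  by repeat apply: continuousD; apply: nc; [exact: C11|exact: C12|exact: C21|exact: C22].
have [M M_bound] := continuous_bounded_itv ab sum_cont.
exists (1 + 2 * M) => s s_in; have := le_trans (ler_norm _) (M_bound s s_in).
have := normr_ge0 (c11 s); have := normr_ge0 (c12 s).
have := normr_ge0 (c21 s); have := normr_ge0 (c22 s).
move=> n22 n21 n12 n11 Msum.
have bound (c x y : R) : `|c| <= M ->
    - (M * (x ^+ 2 + y ^+ 2) / 2) <= c * x * y <= M * (x ^+ 2 + y ^+ 2) / 2.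
  by move=> /(normrM_le_sqrD _ x y); rewrite ler_norml.
have one (x y : R) : - ((x ^+ 2 + y ^+ 2) / 2) <= x * y <= (x ^+ 2 + y ^+ 2) / 2.
  by have := @normrM_le_sqrD _ 1 x y 1; rewrite normr1 lexx !mul1r ler_norml; apply.
have := one (f s) (f' s); have := one (g s) (g' s).
have := bound (c11 s) (f' s) (f s); have := bound (c12 s) (f' s) (g s).
have := bound (c21 s) (g' s) (f s); have := bound (c22 s) (g' s) (g s).
have := sqr_ge0 (f s); have := sqr_ge0 (f' s); have := sqr_ge0 (g s); have := sqr_ge0 (g' s).
rewrite /denergy /energy; move=> *; rewrite ler_norml; apply/andP; split; nra.
Qed.

Lemma energy_eq0_iff [s t : R] : s \in `]l, r[ -> t \in `]l, r[ -> s <= t ->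
  energy s = 0 <-> energy t = 0.
Proof.
move=> s_in t_in st; have sub := subitv_cc_oo s_in t_in.
have [K K_bound] := denergy_bound s_in t_in st.
apply: gronwall_eq0 st _ _ K_bound => u /sub u_in; first exact: energy_is_derive.
by rewrite /energy !addr_ge0 ?sqr_ge0.
Qed.

Lemma linear_system2_eq0_near t0 : t0 \in `]l, r[ ->
  (\forall t \near t0, f t = 0 /\ g t = 0) ->
  {in `]l, r[, forall t : R, f t = 0 /\ g t = 0}.
Proof.
move=> t0_in fg0; have [f0 g0] := nbhs_singleton fg0.
have f'0 : f' t0 = 0.
  apply: is_derive_near_eq (Df _ t0_in) (is_derive_cst 0 t0 1).
  by apply: filterS fg0 => t [].
have g'0 : g' t0 = 0.
  apply: is_derive_near_eq (Dg _ t0_in) (is_derive_cst 0 t0 1).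
  by apply: filterS fg0 => t [].
have E0 : energy t0 = 0 by rewrite /energy f0 g0 f'0 g'0 expr0n /= !addr0.
move=> t t_in; have Et : energy t = 0.
  case: (leP t t0) => [tt0 | /ltW t0t].
  - exact/(energy_eq0_iff t_in t0_in tt0).
  - exact/(energy_eq0_iff t0_in t_in t0t).
move: Et; rewrite /energy.
have := sqr_ge0 (f t); have := sqr_ge0 (f' t); have := sqr_ge0 (g t); have := sqr_ge0 (g' t).
move=> *; have /eqP : f t ^+ 2 = 0 by lra.
have /eqP : g t ^+ 2 = 0 by lra.
by rewrite !sqrf_eq0 => /eqP -> /eqP ->.
Qed.

End LinearSystem2.

Section PlaneGeometry.
Context {R : realType}.
Implicit Types a b c : pt R.

Lemma dist_sym a b : dist a b = dist b a.
Proof. by rewrite /dist /normsq /psub /=; congr Num.sqrt; ring. Qed.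

Lemma sqr_dist a b : dist a b ^+ 2 = (a.1 - b.1) ^+ 2 + (a.2 - b.2) ^+ 2.
Proof. by rewrite /dist sqr_sqrtr // /normsq addr_ge0 ?sqr_ge0. Qed.

Lemma dist_gt0 a b : a <> b -> 0 < dist a b.
Proof.
move=> ab; rewrite /dist sqrtr_gt0 /normsq /psub /= lt_def addr_ge0 ?sqr_ge0 // andbT.
rewrite paddr_eq0 ?sqr_ge0 // !sqrf_eq0 !subr_eq0.
apply/negP => /andP[/eqP e1 /eqP e2]; apply: ab.
by case: a b e1 e2 => [? ?] [? ?] /= -> ->.
Qed.

Lemma equidistant_same_height a b c : a.2 = b.2 -> a <> b ->
  dist a c ^+ 2 = dist b c ^+ 2 -> a.1 + b.1 = 2 * c.1.
Proof.
move=> ab2 ab; rewrite !sqr_dist ab2 => /eqP; rewrite -subr_eq0.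
have -> : (a.1 - c.1) ^+ 2 + (b.2 - c.2) ^+ 2 - ((b.1 - c.1) ^+ 2 + (b.2 - c.2) ^+ 2)
  = (a.1 - b.1) * (a.1 + b.1 - 2 * c.1) by ring.
rewrite mulf_eq0 subr_eq0 => /orP[/eqP ab1 | ]; last by rewrite subr_eq0 => /eqP.
by case: ab; case: a b ab1 ab2 => [? ?] [? ?] /= -> ->.
Qed.

End PlaneGeometry.

Section InverseCube.
Context {F : numFieldType}.

Definition invcube_slope (u v : F) := (u ^+ 2 + v ^+ 2 + u * v) / ((u + v) * u ^+ 3 * v ^+ 3).

Lemma invcube_slope_gt0 [u v : F] : 0 < u -> 0 < v -> 0 < invcube_slope u v.
Proof.
move=> u_gt0 v_gt0; apply: divr_gt0.
- by rewrite !addr_gt0 ?mulr_gt0 ?exprn_gt0.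
- by rewrite !mulr_gt0 ?addr_gt0 ?exprn_gt0.
Qed.

Lemma subr_invcube (u v : F) : 0 < u -> 0 < v ->
  (u ^+ 3)^-1 - (v ^+ 3)^-1 = invcube_slope u v * (v ^+ 2 - u ^+ 2).
Proof.
move=> u_gt0 v_gt0; rewrite /invcube_slope.
by field; rewrite ?mulf_neq0 ?expf_neq0 ?gt_eqF ?addr_gt0.
Qed.

End InverseCube.

Section Continuity.
Context {R : realType}.
Variable t : R.

Lemma continuous_invcube (u : R -> R) : 0 < u t -> {for t, continuous u} ->
  {for t, continuous (fun s => (u s ^+ 3)^-1)}.
Proof.
by move=> u_gt0 uc; apply: continuousV; [rewrite gt_eqF ?exprn_gt0 | continuity].
Qed.

Lemma continuous_invcube_slope (u v : R -> R) : 0 < u t -> 0 < v t ->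
  {for t, continuous u} -> {for t, continuous v} ->
  {for t, continuous (fun s => invcube_slope (u s) (v s))}.
Proof.
move=> u_gt0 v_gt0 uc vc; rewrite /invcube_slope; apply: continuousM; first by continuity.
by apply: continuousV; [rewrite gt_eqF ?mulr_gt0 ?addr_gt0 ?exprn_gt0 | continuity].
Qed.

Lemma continuous_dist (a b : R -> pt R) :
  {for t, continuous (fun s => (a s).1)} -> {for t, continuous (fun s => (a s).2)} ->
  {for t, continuous (fun s => (b s).1)} -> {for t, continuous (fun s => (b s).2)} ->
  {for t, continuous (fun s => dist (a s) (b s))}.
Proof.
move=> *; apply: continuous_comp (@sqrt_continuous _ _); rewrite /normsq /psub /=.
by continuity.
Qed.

End Continuity.

Section SwapAxes.
Context {R : realType}.

Definition swap_xy (q : R -> pt R) : R -> pt R := fun t => ((q t).2, (q t).1).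

Lemma dist_swap (a b : pt R) : dist (a.2, a.1) (b.2, b.1) = dist a b.
Proof. by rewrite /dist /normsq /psub /= addrC. Qed.

Lemma newton_swap [q1 q2 q3 : R -> pt R] [t : R] :
  newton q1 q2 q3 t -> newton (swap_xy q1) (swap_xy q2) (swap_xy q3) t.
Proof.
by rewrite /newton /newton_at /swap_xy /acc /= !dist_swap => -[[? ?] [[? ?] [? ?]]].
Qed.

Lemma collision_free_swap [q1 q2 q3 : R -> pt R] [t : R] :
  collision_free_at q1 q2 q3 t -> collision_free_at (swap_xy q1) (swap_xy q2) (swap_xy q3) t.
Proof.
have swap_inj (a b : pt R) : (a.2, a.1) = (b.2, b.1) -> a = b.
  by case: a b => [? ?] [? ?] [-> ->].
by case=> n12 [n13 n23]; split; [|split] => /swap_inj.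
Qed.

Lemma stays_on_axis_swap (z : R -> pt R) (P : R -> Prop) :
  stays_on_axis (fun t => ((z t).2, (z t).1)) P -> stays_on_axis z P.
Proof. by case=> z0; [right | left]. Qed.

End SwapAxes.

Section AxialMotion.
Context {R : realType} {q1 q2 q3 : R -> pt R}.

Let x1 t := (q1 t).1.
Let x2 t := (q2 t).1.
Let x3 t := (q3 t).1.
Let y1 t := (q1 t).2.
Let y2 t := (q2 t).2.
Let y3 t := (q3 t).2.
Let r12 t := dist (q1 t) (q2 t).
Let r13 t := dist (q1 t) (q3 t).
Let r23 t := dist (q2 t) (q3 t).
Let k12 t := (r12 t ^+ 3)^-1.
Let k13 t := (r13 t ^+ 3)^-1.
Let k23 t := (r23 t ^+ 3)^-1.
Let h t := invcube_slope (r13 t) (r23 t).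
Let ax1 t := (x2 t - x1 t) * k12 t + (x3 t - x1 t) * k13 t.
Let ax2 t := (x1 t - x2 t) * k12 t + (x3 t - x2 t) * k23 t.
Let ax3 t := (x1 t - x3 t) * k13 t + (x2 t - x3 t) * k23 t.
Let ay1 t := (y2 t - y1 t) * k12 t + (y3 t - y1 t) * k13 t.
Let ay2 t := (y1 t - y2 t) * k12 t + (y3 t - y2 t) * k23 t.
Let ay3 t := (y1 t - y3 t) * k13 t + (y2 t - y3 t) * k23 t.

Hypothesis no_collision : {in `]0, 1[, forall t : R, collision_free_at q1 q2 q3 t}.
Hypothesis motion : {in `]0, 1[, forall t : R, newton q1 q2 q3 t}.
Hypotheses (x1_cvg : x1 x @[x --> 1^'-] --> x1 1) (x2_cvg : x2 x @[x --> 1^'-] --> x2 1)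
  (x3_cvg : x3 x @[x --> 1^'-] --> x3 1) (y1_cvg : y1 x @[x --> 1^'-] --> y1 1)
  (y2_cvg : y2 x @[x --> 1^'-] --> y2 1) (y3_cvg : y3 x @[x --> 1^'-] --> y3 1).

Lemma newton_coordinates [t : R] : t \in `]0, 1[ ->
  [/\ second_deriv_at x1 t (ax1 t), second_deriv_at x2 t (ax2 t)
    & second_deriv_at x3 t (ax3 t)] /\
  [/\ second_deriv_at y1 t (ay1 t), second_deriv_at y2 t (ay2 t)
    & second_deriv_at y3 t (ay3 t)].
Proof.
move=> /motion[[N1x N1y] [[N2x N2y] [N3x N3y]]].
move: N2x N2y N3x N3y; rewrite /acc /= ![dist (q2 t) _]dist_sym ![dist (q3 t) _]dist_sym.
by move=> *; split; split.
Qed.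

Lemma positions_continuous [t : R] : t \in `]0, 1[ ->
  [/\ {for t, continuous x1}, {for t, continuous x2} & {for t, continuous x3}] /\
  [/\ {for t, continuous y1}, {for t, continuous y2} & {for t, continuous y3}].
Proof.
move=> /newton_coordinates[[/second_deriv_at_is_derive[D1 _] /second_deriv_at_is_derive[D2 _]
  /second_deriv_at_is_derive[D3 _]] [/second_deriv_at_is_derive[E1 _]
  /second_deriv_at_is_derive[E2 _] /second_deriv_at_is_derive[E3 _]]].
by split; split; apply: is_derive_continuous; eassumption.
Qed.

Lemma distances_gt0 [t : R] : t \in `]0, 1[ -> [/\ 0 < r12 t, 0 < r13 t & 0 < r23 t].
Proof. by move=> /no_collision[n12 [n13 n23]]; split; apply: dist_gt0. Qed.

Lemma invcubes_continuous [t : R] : t \in `]0, 1[ ->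
  [/\ {for t, continuous k12}, {for t, continuous k13}, {for t, continuous k23}
    & {for t, continuous h}].
Proof.
move=> t_in; have [[? ? ?] [? ? ?]] := positions_continuous t_in.
have [? ? ?] := distances_gt0 t_in.
have c12 : {for t, continuous r12} by apply: continuous_dist.
have c13 : {for t, continuous r13} by apply: continuous_dist.
have c23 : {for t, continuous r23} by apply: continuous_dist.
by split; [apply: continuous_invcube..|apply: continuous_invcube_slope].
Qed.

Lemma k13E [t : R] : t \in `]0, 1[ -> k13 t = k23 t + h t * (r23 t ^+ 2 - r13 t ^+ 2).
Proof.
by move=> /distances_gt0[_ ? ?]; rewrite /h -subr_invcube // addrC subrK.
Qed.

Lemma same_height_balance [t : R] : t \in `]0, 1[ -> (\forall s \near t, y1 s = y2 s) ->
  (y3 t - y1 t) * (k13 t - k23 t) = 0.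
Proof.
move=> /newton_coordinates[_ [/second_deriv_at_is_derive[_ D2y1]
  /second_deriv_at_is_derive[_ D2y2] _]] y12.
have := is_derive_near_eq (near_eq_derive1 y12) D2y1 D2y2.
rewrite /ay1 /ay2 (nbhs_singleton y12) subrr !mul0r !add0r => ay12.
by rewrite mulrBr ay12 subrr.
Qed.

Lemma isosceles_of_balance [t : R] : t \in `]0, 1[ -> y1 t = y2 t -> k13 t = k23 t ->
  x1 t + x2 t = 2 * x3 t.
Proof.
move=> t_in y12 k_eq; have [n12 _] := no_collision _ t_in.
apply: equidistant_same_height y12 n12 _.
have [_ r13_gt0 r23_gt0] := distances_gt0 t_in.
have := k13E t_in; rewrite k_eq => /eqP; rewrite -subr_eq0 opprD addrA subrr sub0r.
by rewrite oppr_eq0 mulf_eq0 (gt_eqF (invcube_slope_gt0 r13_gt0 r23_gt0)) /= subr_eq0 => /eqP.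
Qed.

Ltac coefficient_continuity := move=> t t_in;
  have [[? ? ?] [? ? ?]] := positions_continuous t_in;
  have [? ? ? ?] := invcubes_continuous t_in; continuity.

Lemma collinear_case [ts : R] : ts \in `]0, 1[ ->
  (\forall t \near ts, y2 t - y1 t = 0 /\ y3 t - y1 t = 0) ->
  {in `]0, 1], forall t : R, (Z1 q1 q2 t).2 = 0 /\ (Z2 q1 q2 q3 t).2 = 0}.
Proof.
move=> ts_in near0.
pose f t := y2 t - y1 t; pose f' t := derive1 y2 t - derive1 y1 t.
pose g t := y3 t - y1 t; pose g' t := derive1 y3 t - derive1 y1 t.
have fg0 : {in `]0, 1[, forall t : R, f t = 0 /\ g t = 0}.
  apply: (@linear_system2_eq0_near _ 0 1 f f' g g' (fun t => -2 * k12 t - k23 t)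
    (fun t => k23 t - k13 t) (fun t => k23 t - k12 t) (fun t => -2 * k13 t - k23 t)
    _ _ _ _ _ _ _ _ ts ts_in near0).
  1-4: move=> t /newton_coordinates[_ [/second_deriv_at_is_derive[Dy1 D2y1]
    /second_deriv_at_is_derive[Dy2 D2y2] /second_deriv_at_is_derive[Dy3 D2y3]]].
  - exact: is_deriveB.
  - exact: is_deriveB.
  - by have /is_derive_eq := is_deriveB D2y2 D2y1; apply; rewrite /ay1 /ay2 /f /g; ring.
  - by have /is_derive_eq := is_deriveB D2y3 D2y1; apply; rewrite /ay1 /ay3 /f /g; ring.
  1-4: by coefficient_continuity.
have f0 : {in `]0, 1], forall t : R, f t = 0}.
  by apply: cvg_left_eq0 (cvgB y2_cvg y1_cvg) _ => t /fg0[].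
have g0 : {in `]0, 1], forall t : R, g t = 0}.
  by apply: cvg_left_eq0 (cvgB y3_cvg y1_cvg) _ => t /fg0[].
move=> t t_in; move: (f0 t t_in) (g0 t t_in).
by rewrite /f /g /y1 /y2 /y3 /Z1 /Z2 /psub /= => ? ?; split; lra.
Qed.

Lemma isosceles_case [ts : R] : ts \in `]0, 1[ ->
  (\forall t \near ts, y1 t - y2 t = 0 /\ x1 t + x2 t - x3 t - x3 t = 0) ->
  {in `]0, 1], forall t : R, (Z1 q1 q2 t).2 = 0 /\ (Z2 q1 q2 q3 t).1 = 0}.
Proof.
move=> ts_in near0.
pose f t := y1 t - y2 t; pose f' t := derive1 y1 t - derive1 y2 t.
pose g t := x1 t + x2 t - x3 t - x3 t.
pose g' t := derive1 x1 t + derive1 x2 t - derive1 x3 t - derive1 x3 t.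
pose m t := y3 t - (y1 t + y2 t) / 2.
have fg0 : {in `]0, 1[, forall t : R, f t = 0 /\ g t = 0}.
  apply: (@linear_system2_eq0_near _ 0 1 f f' g g'
    (fun t => -2 * k12 t - (k13 t + k23 t) / 2 + 2 * m t ^+ 2 * h t)
    (fun t => - m t * h t * (x1 t - x2 t))
    (fun t => -3 * (x1 t - x2 t) * h t * m t)
    (fun t => -3 / 2 * (k13 t + k23 t) + 3 / 2 * h t * (x1 t - x2 t) ^+ 2)
    _ _ _ _ _ _ _ _ ts ts_in near0).
  (* [r23^2 - r13^2 = 2 m f - (x1 - x2) g], so [k13E] makes the system linear *)
  1-4: move=> t t_in; have /newton_coordinates[[/second_deriv_at_is_derive[Dx1 D2x1]
    /second_deriv_at_is_derive[Dx2 D2x2] /second_deriv_at_is_derive[Dx3 D2x3]]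
    [/second_deriv_at_is_derive[Dy1 D2y1] /second_deriv_at_is_derive[Dy2 D2y2] _]] := t_in.
  - exact: is_deriveB.
  - by apply: is_deriveB => //; apply: is_deriveB => //; exact: is_deriveD.
  - have /is_derive_eq := is_deriveB D2y1 D2y2; apply.
    by rewrite /ay1 /ay2 /f /g /m (k13E t_in) /r13 /r23 !sqr_dist; field.
  - have /is_derive_eq := is_deriveB (is_deriveB (is_deriveD D2x1 D2x2) D2x3) D2x3; apply.
    by rewrite /ax1 /ax2 /ax3 /f /g /m (k13E t_in) /r13 /r23 !sqr_dist; field.
  1-4: by rewrite /m; coefficient_continuity.
have f0 : {in `]0, 1], forall t : R, f t = 0}.
  by apply: cvg_left_eq0 (cvgB y1_cvg y2_cvg) _ => t /fg0[].
have g0 : {in `]0, 1], forall t : R, g t = 0}.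
  by apply: cvg_left_eq0 (cvgB (cvgB (cvgD x1_cvg x2_cvg) x3_cvg) x3_cvg) _ => t /fg0[].
move=> t t_in; move: (f0 t t_in) (g0 t t_in).
by rewrite /f /g /x1 /x2 /x3 /y1 /y2 /Z1 /Z2 /psub /= => ? ?; split; lra.
Qed.

Lemma axes_of_same_height (t1 t2 : R) : 0 < t1 -> t1 < t2 -> t2 <= 1 ->
  (forall t, t1 <= t <= t2 -> (Z1 q1 q2 t).2 = 0) ->
  stays_on_axis (Z1 q1 q2) (fun t => 0 < t <= 1) /\
  stays_on_axis (Z2 q1 q2 q3) (fun t => 0 < t <= 1).
Proof.
move=> t1_gt0 t12 t2_le1 Z1_0.
have sub : {subset `]t1, t2[ <= `]0, 1[}.
  by apply: subitvP; rewrite subitvE !bnd_simp ltW.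
have y12 ts : ts \in `]t1, t2[ -> \forall t \near ts, y1 t = y2 t.
  move=> /near_in_itvoo; apply: filterS => t; rewrite in_itv /= => /andP[t1t tt2].
  by apply/eqP; rewrite -subr_eq0; apply/eqP; apply: Z1_0; rewrite !ltW.
have itv t : 0 < t <= 1 -> t \in `]0, 1] by rewrite in_itv.
have [[ts ts_in y31] | y31] :=
  pselect (exists2 ts, ts \in `]t1, t2[ & y3 ts - y1 ts != 0).
- have [_ [c1 _ c3]] := positions_continuous (sub _ ts_in).
  have near_iso : \forall t \near ts, y1 t - y2 t = 0 /\ x1 t + x2 t - x3 t - x3 t = 0.
    near=> t.
    have t_in : t \in `]t1, t2[ by near: t; exact: near_in_itvoo.
    have y31t : y3 t - y1 t != 0 by near: t; exact: cvgr_neq0 (continuousB c3 c1) y31.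
    have y12t := nbhs_singleton (y12 _ t_in).
    have /eqP := same_height_balance (sub _ t_in) (y12 _ t_in).
    rewrite mulf_eq0 (negbTE y31t) subr_eq0 => /eqP /(isosceles_of_balance (sub _ t_in) y12t).
    by rewrite y12t; split; lra.
  have iso1 := isosceles_case (sub _ ts_in) near_iso.
  by split; [left | right] => t /itv /iso1[].
- have [mid1 mid2] := midf_lt t12.
  have mid_in : (t1 + t2) / 2 \in `]t1, t2[ by rewrite in_itv /= mid1 mid2.
  have near_col : \forall t \near (t1 + t2) / 2, y2 t - y1 t = 0 /\ y3 t - y1 t = 0.
    apply: filterS2 (y12 _ mid_in) (near_in_itvoo mid_in) => t y12t t_in.
    rewrite y12t subrr; split => //; apply/eqP/negP => y31t.
    by apply: y31; exists t; rewrite // y12t; apply/negP.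
  have col1 := collinear_case (sub _ mid_in) near_col.
  by split; left => t /itv /col1[].
Unshelve. all: by end_near. Qed.

End AxialMotion.

Theorem proposition5p6 (R : realType) (q1 q2 q3 : R -> pt R) :
  action_minimizer q1 q2 q3 ->
  (forall t : R, 0 < t <= 1 -> collision_free_at q1 q2 q3 t) ->
  (forall t : R, 0 < t < 1 -> newton q1 q2 q3 t) ->
  forall t1 t2 : R, 0 < t1 -> t1 < t2 -> t2 <= 1 ->
  stays_on_axis (Z1 q1 q2) (fun t => t1 <= t <= t2) ->
  stays_on_axis (Z1 q1 q2) (fun t => 0 < t <= 1) /\
  stays_on_axis (Z2 q1 q2 q3) (fun t => 0 < t <= 1).
Proof.
move=> [v1 [v2 [v3 [[[/H1fun_cvg_left x1_cvg /H1fun_cvg_left y1_cvg]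
  [[/H1fun_cvg_left x2_cvg /H1fun_cvg_left y2_cvg]
  [[/H1fun_cvg_left x3_cvg /H1fun_cvg_left y3_cvg] _]]] _]]]] no_collision motion
  t1 t2 t1_gt0 t12 t2_le1 Z1_axis.
have no_collision' : {in `]0, 1[, forall t : R, collision_free_at q1 q2 q3 t}.
  by move=> t; rewrite in_itv /= => /andP[t_gt0 t_lt1]; apply: no_collision; rewrite t_gt0 ltW.
have motion' : {in `]0, 1[, forall t : R, newton q1 q2 q3 t}.
  by move=> t; rewrite in_itv; exact: motion.
case: Z1_axis => [Z1_x | Z1_y].
- exact: axes_of_same_height no_collision' motion' x1_cvg x2_cvg x3_cvg y1_cvg y2_cvg y3_cvg
    _ _ t1_gt0 t12 t2_le1 Z1_x.
- have [? ?] := axes_of_same_height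
    (fun t t_in => collision_free_swap (no_collision' t t_in))
    (fun t t_in => newton_swap (motion' t t_in))
    y1_cvg y2_cvg y3_cvg x1_cvg x2_cvg x3_cvg _ _ t1_gt0 t12 t2_le1 Z1_y.
  by split; apply: stays_on_axis_swap.
Qed.
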